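(* Let $q$ be a distribution over $[n]$ and $x\in(0,1)$ with $\|q_{-x}\|_0>1$. Then there exists $i^*\in[n]$ such that, with $A=\{j\in[n]: q_j\le q_{i^*}\}$: (i) $\max_{j\in A}q_j=q_{i^*}$; (ii) $q(A)\ge x$; and (iii) $\dfrac{q(A)}{q_{i^*}}\ge\dfrac{\|q_{-x}\|_0-1}{\ln(1/x)}$.
   Context: For $x\ge0$, $q_{-x}$ is the vector obtained from $q$ by iteratively removing its smallest entries, stopping just before the total of the removed entries would exceed $x$. $\|v\|_0$ is the number of nonzero entries of $v$. $q(A)=\sum_{j\in A}q_j$. *)

From HB Require Import structures.
From mathcomp Require Import all_boot all_order all_algebra.
From mathcomp Require Import reals exp.
Set Implicit Arguments. Unset Strict Implicit. Unset Printing Implicit Defensive.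
Import Order.TTheory GRing.Theory Num.Theory.
Local Open Scope ring_scope.

Section Defs.
Variables (R : realType) (n : nat).

Definition is_distribution (q : 'I_n -> R) : Prop :=
  (forall j, 0 <= q j) /\ \sum_(j < n) q j = 1.

(* Position of index i in the ascending order of the entries of q,
   ties broken by index: number of j with (q j, j) < (q i, i) lexicographically. *)
Definition rank_asc (q : 'I_n -> R) (i : 'I_n) : nat :=
  #|[set j : 'I_n | (q j < q i) || ((q j == q i) && (j < i)%N)]|.

Definition mass_smallest (q : 'I_n -> R) (k : nat) : R :=
  \sum_(j < n | (rank_asc q j < k)%N) q j.

Definition nremoved (q : 'I_n -> R) (x : R) : nat :=
  \max_(k < n.+1 | mass_smallest q k <= x) (k : nat).

Definition qminus (q : 'I_n -> R) (x : R) : 'I_n -> R :=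
  fun i => if (rank_asc q i < nremoved q x)%N then 0 else q i.

Definition norm0 (v : 'I_n -> R) : nat := #|[set i : 'I_n | v i != 0]|.

End Defs.

From HB Require Import structures.
From mathcomp Require Import all_boot all_order all_algebra.
From mathcomp Require Import reals exp.
From mathcomp Require Import sequences.
From mathcomp Require Import zify.
From mathcomp.algebra_tactics Require Import ring lra.
Import Order.TTheory GRing.Theory Num.Theory.
Set Implicit Arguments. Unset Strict Implicit. Unset Printing Implicit Defensive.
Local Open Scope ring_scope.

(* Proof of Lemma C.3.
   Sort the entries of q increasingly (ties broken by index), let w t be the
   t-th smallest entry and S t := mass_smallest q t the mass of the t
   smallest ones, so that S (t+1) = S t + q (w t).  With k := nremoved q x we
   have S k <= x < S (k+1), and q_{-x} keeps at most n - k nonzero entries,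
   so d := ||q_{-x}||_0 - 1 <= n - k - 1.  Put L := ln (1/x) > 0.
   - If some r > k satisfies d q(w r) <= L S(r+1), take i* := w r: the set
     A = {j | q j <= q i*} contains the r+1 smallest entries, so
     q(A) >= S(r+1) >= S(k+1) > x and q(A)/q i* >= S(r+1)/q(w r) >= d/L.
   - Otherwise S r < a S(r+1) for every r in (k, n) with a := 1 - L/d, and
     iterating gives S(k+1) <= a^(n-k-1) S n <= a^d <= exp(-L)^d = x,
     contradicting S(k+1) > x. *)

Section AscendingOrder.
Variables (R : realType) (n : nat) (q : 'I_n -> R).

Definition precedes (j i : 'I_n) : bool :=
  (q j < q i) || ((q j == q i) && (j < i)%N).

Lemma precedes_trans l j i : precedes l j -> precedes j i -> precedes l i.
Proof.
rewrite /precedes => /orP[h1|/andP[/eqP e1 h1]] /orP[h2|/andP[/eqP e2 h2]].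
- by rewrite (lt_trans h1 h2).
- by rewrite -e2 h1.
- by rewrite e1 h2.
- by rewrite e1 e2 eqxx (ltn_trans h1 h2) orbT.
Qed.

Lemma precedes_total i j : i != j -> precedes i j || precedes j i.
Proof.
move=> nij; rewrite /precedes.
case: (ltgtP (q i) (q j)) => //= _.
case: (ltngtP i j) => // /val_inj eij.
by rewrite eij eqxx in nij.
Qed.

Lemma rank_asc_lt j i : precedes j i -> (rank_asc q j < rank_asc q i)%N.
Proof.
move=> h; apply: proper_card; apply/properP; split.
- by apply/subsetP => l; rewrite !inE => hl; exact: precedes_trans hl h.
- by exists j; rewrite inE // ltxx ltnn andbF.
Qed.

Lemma rank_asc_ltn i : (rank_asc q i < n)%N.
Proof.
rewrite -[X in (_ < X)%N]card_ord -cardsT; apply: proper_card.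
apply/properP; split; first exact: subsetT.
by exists i; rewrite !inE // ltxx ltnn andbF.
Qed.

Lemma rank_asc_sorted j i : (rank_asc q j <= rank_asc q i)%N -> q j <= q i.
Proof.
move=> h; rewrite leNgt; apply/negP => hl.
have : precedes i j by rewrite /precedes hl.
by move/rank_asc_lt; rewrite ltnNge h.
Qed.

Definition rank_ord (i : 'I_n) : 'I_n := Ordinal (rank_asc_ltn i).

Lemma rank_ord_inj : injective rank_ord.
Proof.
move=> i j /(congr1 val) /= e; apply/eqP/negPn/negP => nij.
by case/orP: (precedes_total nij) => /rank_asc_lt; rewrite e ltnn.
Qed.

Definition nth_smallest (t : 'I_n) : 'I_n := invF rank_ord_inj t.

Lemma rank_nth_smallest t : rank_asc q (nth_smallest t) = t.
Proof. by have := f_invF rank_ord_inj t => /(congr1 val). Qed.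

Lemma card_rank_ge k : (#|[set i : 'I_n | (k <= rank_asc q i)%N]| <= n - k)%N.
Proof.
rewrite -(card_imset _ rank_ord_inj).
apply: (leq_trans (subset_leq_card (_ : _ \subset [set t : 'I_n | (k <= t)%N]))).
  by apply/subsetP => y /imsetP[i]; rewrite inE => hi ->; rewrite inE.
rewrite -sum1_card (eq_bigl (fun i : 'I_n => true && (k <= i)%N)); last first.
  by move=> i; rewrite inE.
by rewrite -(@big_geq_mkord _ _ _ k n xpredT (fun _ => 1%N)) sum_nat_const_nat muln1.
Qed.

Lemma norm0_qminus_le x : (norm0 (qminus q x) <= n - nremoved q x)%N.
Proof.
apply: leq_trans (card_rank_ge _); apply: subset_leq_card.
apply/subsetP => i; rewrite !inE /qminus.
by case: ltnP => [_|//]; rewrite eqxx.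
Qed.

End AscendingOrder.

Section PartialMasses.
Variables (R : realType) (n : nat) (q : 'I_n -> R).
Hypothesis q_ge0 : forall j, 0 <= q j.
Local Notation S := (mass_smallest q).
Local Notation w := (nth_smallest q).

Lemma sum_mono_pred (P Q : pred 'I_n) :
  (forall j, P j -> Q j) -> \sum_(j | P j) q j <= \sum_(j | Q j) q j.
Proof.
move=> PQ; rewrite [X in X <= _]big_mkcond [X in _ <= X]big_mkcond /=.
apply: ler_sum => j _; case: ifP => hP; first by rewrite (PQ _ hP).
by case: ifP.
Qed.

Lemma mass_smallest0 : S 0 = 0.
Proof. by rewrite /mass_smallest big_pred0 // => j; rewrite ltn0. Qed.

Lemma mass_smallest_all : S n = \sum_(j < n) q j.
Proof. by apply: eq_bigl => j; rewrite rank_asc_ltn. Qed.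

Lemma mass_smallest_ge0 t : 0 <= S t.
Proof. by apply: sumr_ge0. Qed.

Lemma mass_smallest_mono a b : (a <= b)%N -> S a <= S b.
Proof. by move=> ab; apply: sum_mono_pred => j /leq_trans; apply. Qed.

Lemma mass_smallestS (t : 'I_n) : S t.+1 = S t + q (w t).
Proof.
rewrite /mass_smallest (bigID (fun j => rank_asc q j == t)) /= addrC.
congr (_ + _); first by apply: eq_bigl => j; rewrite ltnS ltn_neqAle andbC.
apply: big_pred1 => j /=; rewrite ltnS.
apply/andP/eqP => [[_ /eqP e]|->]; last by rewrite rank_nth_smallest leqnn eqxx.
by apply: (rank_ord_inj (q := q)); apply: val_inj; rewrite /= rank_nth_smallest e.
Qed.

Lemma mass_smallest_le_sublevel (r : 'I_n) :
  S r.+1 <= \sum_(j in [set j | q j <= q (w r)]) q j.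
Proof.
apply: sum_mono_pred => j hj; rewrite inE; apply: rank_asc_sorted.
by rewrite rank_nth_smallest -ltnS.
Qed.

Lemma mass_nremoved_le x : 0 <= x -> S (nremoved q x) <= x.
Proof.
move=> x_ge0; apply: (big_ind (fun v : nat => S v <= x)) => //.
- by rewrite mass_smallest0.
- by move=> a b ha hb; rewrite /maxn; case: ltnP.
Qed.

Lemma nremoved_lt x : 0 <= x -> x < S n -> (nremoved q x < n)%N.
Proof.
move=> x_ge0 xS; have kle : (nremoved q x <= n)%N.
  by apply/bigmax_leqP => i _; rewrite -ltnS.
rewrite ltn_neqAle kle andbT; apply/eqP => e.
by have := mass_nremoved_le x_ge0; rewrite e; lra.
Qed.

Lemma mass_nremovedS_gt x (klt : (nremoved q x < n)%N) : x < S (nremoved q x).+1.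
Proof.
rewrite ltNge; apply/negP => h.
have := leq_bigmax_cond (P := fun j : 'I_n.+1 => S j <= x)
   (F := fun j : 'I_n.+1 => nat_of_ord j) (Ordinal (klt : ((nremoved q x).+1 < n.+1)%N)) h.
by rewrite /= -/(nremoved q x) ltnn.
Qed.

End PartialMasses.

Lemma geometric_contraction (R : numDomainType) (s : nat -> R) (a : R) m j :
  0 <= a -> (forall i, (m <= i < m + j)%N -> s i <= a * s i.+1) ->
  s m <= a ^+ j * s (m + j)%N.
Proof.
move=> a_ge0; elim: j => [|j IH] hs; first by rewrite expr0 mul1r addn0.
have := hs (m + j)%N; rewrite leq_addr addnS ltnSn => /(_ isT) hlast.
rewrite exprSr -mulrA; apply: le_trans (IH _) _.
  by move=> i /andP[hmi hi]; apply: hs; rewrite hmi addnS ltnS ltnW.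
by apply: ler_wpM2l; [exact: exprn_ge0 | exact: hlast].
Qed.

Lemma expn_one_sub_le_expR (R : realType) (y : R) d :
  0 <= 1 - y -> (1 - y) ^+ d <= expR (- (d%:R * y)).
Proof.
move=> hy; rewrite -mulrN expRM_natl; apply: lerXn2r; rewrite ?nnegrE ?expR_ge0 //.
exact: expR_ge1Dx.
Qed.

Lemma bigmax_attained (R : realDomainType) (I : finType) (A : {set I})
    (F : I -> R) i :
  i \in A -> 0 <= F i -> (forall j, j \in A -> F j <= F i) ->
  \big[Num.max/0]_(j in A) F j = F i.
Proof.
move=> iA Fi_ge0 Fi_max; apply/eqP; rewrite eq_le; apply/andP; split.
  by apply: (big_ind (fun v => v <= F i)) => // u v hu hv; rewrite ge_max hu hv.
by rewrite (bigD1 i) //= le_max lexx.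
Qed.

Section LemmaC3.
Variables (R : realType) (n : nat) (q : 'I_n -> R) (x : R).
Hypotheses (q_ge0 : forall j, 0 <= q j) (q_sum1 : \sum_(j < n) q j = 1).
Hypotheses (x_gt0 : 0 < x) (x_lt1 : x < 1).
Local Notation S := (mass_smallest q).
Local Notation w := (nth_smallest q).
Local Notation k := (nremoved q x).
Local Notation L := (ln (1 / x)).

Lemma ln_inv_gt0 : 0 < L.
Proof. by apply: ln_gt0; rewrite ltr_pdivlMr // mul1r. Qed.

Lemma nremoved_ltn : (k < n)%N.
Proof. by apply: nremoved_lt; rewrite ?mass_smallest_all ?q_sum1 ?ltW. Qed.

Lemma mass_nremovedS_gt_x : x < S k.+1.
Proof. exact: mass_nremovedS_gt nremoved_ltn. Qed.

(* Every entry kept in q_{-x} is positive: the first kept one, w k, has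
   q (w k) = S (k+1) - S k > x - x, and the later ones are larger. *)
Lemma kept_entry_gt0 (r : 'I_n) : (k <= r)%N -> 0 < q (w r).
Proof.
move=> kr; set wk := w (Ordinal nremoved_ltn).
have wk_gt0 : 0 < q wk.
  have := mass_smallestS q (Ordinal nremoved_ltn).
  have := mass_nremoved_le q (ltW x_gt0); have := mass_nremovedS_gt_x => /=; lra.
by apply: lt_le_trans wk_gt0 _; apply: rank_asc_sorted; rewrite !rank_nth_smallest.
Qed.

Lemma heavy_index_witness (r : 'I_n) d :
  (k < r)%N -> d%:R * q (w r) <= L * S r.+1 ->
  let A := [set j : 'I_n | q j <= q (w r)] in
  [/\ \big[Num.max/0]_(j in A) q j = q (w r),
      x <= \sum_(j in A) q j
    & d%:R / L <= (\sum_(j in A) q j) / q (w r)].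
Proof.
move=> kr hr A.
have mass_A := mass_smallest_le_sublevel q_ge0 r.
have q_wr_gt0 := kept_entry_gt0 (ltnW kr).
split.
- by apply: bigmax_attained; rewrite ?inE // => j; rewrite inE.
- have := mass_smallest_mono q_ge0 (leqW kr); have := mass_nremovedS_gt_x; lra.
- have L_gt0 := ln_inv_gt0.
  rewrite ler_pdivlMr // mulrAC ler_pdivrMr //; apply: le_trans hr _.
  by rewrite mulrC ler_wpM2r // ltW.
Qed.

(* Second case is impossible: if every r in (k, n) had d q(w r) > L S(r+1),
   the partial masses would contract geometrically by a = 1 - L/d and force
   S(k+1) <= a^d <= exp(-L) = x. *)
Lemma heavy_index_exists d : (0 < d)%N -> (d <= n - k.+1)%N ->
  exists2 r : 'I_n, (k < r)%N & d%:R * q (w r) <= L * S r.+1.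
Proof.
move=> d_gt0 d_le.
have [r /andP[kr hr]|no_heavy] :=
  pickP (fun r : 'I_n => (k < r)%N && (d%:R * q (w r) <= L * S r.+1)).
  by exists r.
exfalso; have L_gt0 := ln_inv_gt0; have d_gt0R : 0 < (d%:R : R) by rewrite ltr0n.
set a := 1 - L / d%:R.
have contract (r : 'I_n) : (k < r)%N -> S r < a * S r.+1.
  move=> kr; have := no_heavy r; rewrite kr /= => /negbT; rewrite -ltNge => hlt.
  have := mass_smallestS q r; have : L / d%:R * S r.+1 < q (w r).
    by rewrite mulrAC ltr_pdivrMr // [_ * d%:R]mulrC.
  have -> : a * S r.+1 = S r.+1 - L / d%:R * S r.+1 by rewrite /a; ring.
  lra.
have a_ge0 : 0 <= a.
  have k1n : (k.+1 < n)%N by lia.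
  have := contract (Ordinal k1n) (ltnSn k).
  have := mass_smallest_ge0 q_ge0 k.+1; have := mass_smallest_ge0 q_ge0 k.+2; rewrite /=; nra.
have a_le1 : a <= 1.
  have : 0 < L / d%:R by apply: divr_gt0.
  rewrite /a; lra.
have geometric : S k.+1 <= a ^+ (n - k.+1) * S (k.+1 + (n - k.+1))%N.
  apply: geometric_contraction a_ge0 _ => i /andP[ki ilt].
  have iltn : (i < n)%N by move: ilt; rewrite subnKC ?nremoved_ltn.
  exact: ltW (contract (Ordinal iltn) ki).
have exp_bound : a ^+ d <= x.
  apply: le_trans (expn_one_sub_le_expR d a_ge0) _.
  rewrite mulrCA mulfV ?gt_eqF // mulr1 div1r lnV ?posrE // opprK lnK ?posrE //.
have := ler_wiXn2l a_ge0 a_le1 d_le; have := mass_nremovedS_gt_x.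
move: geometric; rewrite subnKC ?nremoved_ltn // mass_smallest_all q_sum1 mulr1; lra.
Qed.

End LemmaC3.

Theorem lemmaC3 (R : realType) (n : nat) (q : 'I_n -> R) (x : R) :
  is_distribution q -> 0 < x < 1 -> (1 < norm0 (qminus q x))%N ->
  exists istar : 'I_n,
    let A := [set j : 'I_n | q j <= q istar] in
    [/\ \big[Num.max/0]_(j in A) q j = q istar,
        x <= \sum_(j in A) q j
      & (norm0 (qminus q x) - 1)%:R / ln (1 / x)
          <= (\sum_(j in A) q j) / q istar].
Proof.
move=> [q_ge0 q_sum1] /andP[x_gt0 x_lt1] norm_gt1.
have d_gt0 : (0 < norm0 (qminus q x) - 1)%N by rewrite subn_gt0.
have d_le : (norm0 (qminus q x) - 1 <= n - (nremoved q x).+1)%N.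
  by have := norm0_qminus_le q x; lia.
have [r kr heavy] := heavy_index_exists q_ge0 q_sum1 x_gt0 x_lt1 d_gt0 d_le.
by exists (nth_smallest q r); exact: heavy_index_witness.
Qed.
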